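(* For every node $p$, if $p$ is active at time $t \geq t_p^e + 2D$, then $SysInfo^{[0, t-D]} \subseteq Changes_p^t$.
   Context: Model: asynchronous message passing; an adversary generates at most one Enter($p$), Leave($p$), Crash($p$) signal per node (forced leaves of crashed nodes may be generated at other active nodes and count toward churn). A node is present at $t$ if entered and not left; $N(t)$ is the number present, $N(t)\geq N_{min}$; $S_0$ is the set present at time 0; active = present and not crashed. A message broadcast by $p$ at time $t$ is received within $D$ time by every $q\neq p$ active throughout $[t,t+D]$ ($D$ unknown, no lower bound, FIFO). Churn: for some $\alpha<1$, at most $\alpha N(t)$ nodes enter or leave during any $[t,t+D]$. Failures: for some $\Delta<1$, at any $t$ at most $\Delta N(t)$ present nodes have crashed. Algorithm (CCReg, joining part): node $p$ keeps $Changes_p$ of $enter(q)$, $join(q)$, $leave(q)$ events (initially $\{enter(q),join(q): q\in S_0\}$ if $p\in S_0$, else empty); $Changes_p^t$ is its value at time $t$, and $Present_p=\{q: enter(q)\in Changes_p, leave(q)\notin Changes_p\}$. On Enter($p$) at time $t_p^e$ ($t_p^e=0$ for $p\in S_0$), $p$ adds $enter(p)$ and broadcasts enter; a receiver adds $enter(p)$ and broadcasts an enter-echo with its Changes set (and value, is_joined flag); receivers merge Changes sets from enter-echoes. After its first enter-echo from a joined node, $p$ sets $join\_bound:=\gamma|Present_p|$ and joins at time $t_p^j$ (adds $join(p)$, broadcasts joined) once it has received $join\_bound$ enter-echoes. Joined messages (sent at $t_q^j$) and leave messages (sent at $t_q^\ell$) cause receivers to add the event and broadcast an echo, whose receivers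 also add it. For a time interval $I$, $SysInfo^I = \{enter(q): t_q^e\in I\}\cup\{join(q): t_q^j\in I\}\cup\{leave(q): t_q^\ell\in I\}$. Assumptions: $\alpha\leq 1-2^{-1/4}$ and $1<((1-\alpha)^3-\Delta(1+\alpha)^3)N_{min}$. *)

From Stdlib Require Import Reals List.
Open Scope R_scope.

Inductive ev (Node : Type) : Type :=
| EEnter : Node -> ev Node
| EJoin  : Node -> ev Node
| ELeave : Node -> ev Node.
Arguments EEnter {Node} _.
Arguments EJoin {Node} _.
Arguments ELeave {Node} _.

(** Messages of the joining part.  An enter-echo carries the Changes set of
    its sender (the value / is_joined fields play no role here). *)
Inductive msg (Node : Type) : Type :=
| MEnter      : Node -> msg Node
| MEnterEcho  : (ev Node -> Prop) -> msg Node
| MJoined     : Node -> msg Node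
| MJoinedEcho : Node -> msg Node
| MLeave      : Node -> msg Node
| MLeaveEcho  : Node -> msg Node.
Arguments MEnter {Node} _.
Arguments MEnterEcho {Node} _.
Arguments MJoined {Node} _.
Arguments MJoinedEcho {Node} _.
Arguments MLeave {Node} _.
Arguments MLeaveEcho {Node} _.

(** An execution: times of the Enter / join / Leave / Crash events of each
    node ([None] = never happens; at most one of each kind per node),
    broadcasts [bcast p t m] (p broadcasts m at time t), receptions
    [recv q t p m] (q receives at time t the message m broadcast by p), and
    the local variable [changes p t] = Changes_p^t (value at time t, after all
    steps taken at time t). *)
Record exec (Node : Type) : Type := mkExec {
  te : Node -> option R;
  tj : Node -> option R;
  tl : Node -> option R;
  tc : Node -> option R;
  bcast : Node -> R -> msg Node -> Prop;
  recv : Node -> R -> Node -> msg Node -> Prop;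
  changes : Node -> R -> ev Node -> Prop
}.
Arguments te {Node} _ _.
Arguments tj {Node} _ _.
Arguments tl {Node} _ _.
Arguments tc {Node} _ _.
Arguments bcast {Node} _ _ _ _.
Arguments recv {Node} _ _ _ _ _.
Arguments changes {Node} _ _ _ _.

Section Model.
Context {Node : Type} (X : exec Node).

Definition present (t : R) (p : Node) : Prop :=
  (exists a, te X p = Some a /\ a <= t) /\
  (forall b, tl X p = Some b -> t < b).

Definition crashed (t : R) (p : Node) : Prop :=
  exists c, tc X p = Some c /\ c <= t.

Definition active (t : R) (p : Node) : Prop :=
  present t p /\ ~ crashed t p.

Definition active_throughout (p : Node) (t1 t2 : R) : Prop :=
  forall s, t1 <= s <= t2 -> active s p.

Definition S0 (p : Node) : Prop := present 0 p.

(** p enters or leaves during [t1,t2] (initial presence at time 0 is not an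
    Enter event). *)
Definition enters_or_leaves_in (t1 t2 : R) (p : Node) : Prop :=
  (exists a, te X p = Some a /\ 0 < a /\ t1 <= a <= t2) \/
  (exists b, tl X p = Some b /\ t1 <= b <= t2).

Definition SysInfo (t1 t2 : R) (e : ev Node) : Prop :=
  match e with
  | EEnter q => exists s, te X q = Some s /\ t1 <= s <= t2
  | EJoin q  => exists s, tj X q = Some s /\ t1 <= s <= t2
  | ELeave q => exists s, tl X q = Some s /\ t1 <= s <= t2
  end.

End Model.

Definition has_card {A : Type} (P : A -> Prop) (n : nat) : Prop :=
  exists l : list A, NoDup l /\ length l = n /\ forall x, In x l <-> P x.

Definition card_le {A : Type} (P : A -> Prop) (x : R) : Prop :=
  forall l : list A, NoDup l -> (forall y, In y l -> P y) -> INR (length l) <= x.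

Record model_assumptions {Node : Type} (X : exec Node)
    (Nmin : nat) (alpha Delta D : R) : Prop := {
  D_pos : 0 < D;
  te_nonneg : forall p a, te X p = Some a -> 0 <= a;
  tl_after_te : forall p b, tl X p = Some b ->
    exists a, te X p = Some a /\ a < b;
  tc_after_te : forall p c, tc X p = Some c ->
    exists a, te X p = Some a /\ a <= c;
  tj_wf : forall p j, tj X p = Some j ->
    (exists a, te X p = Some a /\ a <= j) /\
    (forall b, tl X p = Some b -> j < b) /\
    (forall c, tc X p = Some c -> j <= c);
  S0_joined : forall p, S0 X p -> tj X p = Some 0;
  delivery : forall p t m q, bcast X p t m -> q <> p ->
    active_throughout X q t (t + D) ->
    exists t', t <= t' <= t + D /\ recv X q t' p m;
  N_min_bound : forall t, 0 <= t ->
    exists n, has_card (present X t) n /\ (Nmin <= n)%nat;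
  churn : forall t n, 0 <= t -> has_card (present X t) n ->
    card_le (enters_or_leaves_in X t (t + D)) (alpha * INR n);
  failures : forall t n, 0 <= t -> has_card (present X t) n ->
    card_le (fun p => present X t p /\ crashed X t p) (Delta * INR n)
}.

Record ccreg_joining {Node : Type} (X : exec Node) : Prop := {
  changes_mono : forall p t1 t2 e, t1 <= t2 ->
    changes X p t1 e -> changes X p t2 e;
  init_S0 : forall p q, S0 X p -> S0 X q ->
    changes X p 0 (EEnter q) /\ changes X p 0 (EJoin q);
  on_Enter : forall p a, te X p = Some a -> 0 < a ->
    changes X p a (EEnter p) /\ bcast X p a (MEnter p);
  on_enter : forall q s w r, recv X q s w (MEnter r) -> active X s q ->
    changes X q s (EEnter r) /\
    exists c : ev Node -> Prop, bcast X q s (MEnterEcho c) /\ c (EEnter r) /\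
      (forall s' e, s' < s -> changes X q s' e -> c e);
  on_enter_echo : forall q s w c, recv X q s w (MEnterEcho c) -> active X s q ->
    forall e, c e -> changes X q s e;
  on_join : forall p j, tj X p = Some j -> 0 < j ->
    changes X p j (EJoin p) /\ bcast X p j (MJoined p);
  on_joined : forall q s w r, recv X q s w (MJoined r) -> active X s q ->
    changes X q s (EJoin r) /\ bcast X q s (MJoinedEcho r);
  on_joined_echo : forall q s w r, recv X q s w (MJoinedEcho r) -> active X s q ->
    changes X q s (EJoin r);
  (* Leave(q): q broadcasts leave, or, if q has crashed, the (forced) leave is
     generated at another active node w, which adds leave(q) and broadcasts *)
  on_Leave : forall q b, tl X q = Some b ->
    exists w, bcast X w b (MLeave q) /\
      ((w = q /\ forall c, tc X q = Some c -> b < c) \/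
       (w <> q /\ crashed X b q /\ active X b w /\ changes X w b (ELeave q)));
  on_leave : forall q s w r, recv X q s w (MLeave r) -> active X s q ->
    changes X q s (ELeave r) /\ bcast X q s (MLeaveEcho r);
  on_leave_echo : forall q s w r, recv X q s w (MLeaveEcho r) -> active X s q ->
    changes X q s (ELeave r)
}.

From Pilot Require Import Defs.
From Stdlib Require Import Reals List Lra Lia Classical.
Open Scope R_scope.

(* A node p entering at t_p^e > 0 learns the events older than its entry
   from a single enter-echo.  Charging the nodes present at
   t0 = max(0, t_p^e - 2D) that enter, leave or crash in the next three
   windows of length D to the churn and failure budgets loses at most
   (3 alpha + Delta) N(t0) < N(t0) of them, so some node q stays active
   until t_p^e + D.  As q entered at time 0 or more than 2D before p, by
   induction on time it already knows every event older than its own entry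
   when it echoes p's enter message; later events reach q directly, and
   reach p either inside q's echo or through q's own re-broadcast of them.
   Events after t_p^e reach p directly, since p stays active for D after
   each of them. *)

Lemma Rpower_2_neg_quarter_ge : 3 / 4 <= Rpower 2 (- (1 / 4)).
Proof.
  set (x := Rpower 2 (- (1 / 4))).
  assert (Hx : 0 < x) by apply exp_pos.
  assert (Hx4 : x ^ 4 = / 2).
  { rewrite <- Rpower_pow by exact Hx. unfold x. rewrite Rpower_mult.
    replace (- (1 / 4) * INR 4) with (Ropp 1) by (simpl; lra).
    rewrite Rpower_Ropp, Rpower_1 by lra. reflexivity. }
  destruct (Rle_or_lt (3 / 4) x) as [|Hlt]; [assumption | exfalso].
  simpl in Hx4.
  assert (x * x < 9 / 16) by nra.
  assert (x * x * (x * x) < 81 / 256) by nra.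
  nra.
Qed.

Lemma three_alpha_plus_Delta_lt_1 (alpha Delta : R) :
  0 <= alpha -> alpha <= 1 / 4 -> 0 <= Delta ->
  0 < (1 - alpha) ^ 3 - Delta * (1 + alpha) ^ 3 -> 3 * alpha + Delta < 1.
Proof.
  intros Ha Ha4 Hd H.
  destruct (Rlt_or_le (3 * alpha + Delta) 1) as [|Hc]; [assumption | exfalso].
  assert (0 < (1 + alpha) ^ 3) by (apply pow_lt; lra).
  assert (Delta * (1 + alpha) ^ 3 >= (1 - 3 * alpha) * (1 + alpha) ^ 3)
    by (apply Rle_ge, Rmult_le_compat_r; lra).
  assert ((1 - 3 * alpha) * (1 + alpha) ^ 3 - (1 - alpha) ^ 3
          = alpha * (3 - 9 * alpha - 7 * alpha ^ 2 - 3 * alpha ^ 3)) by ring.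
  assert (alpha ^ 2 <= 1 / 16) by nra.
  assert (alpha ^ 3 <= 1 / 64) by (simpl; nra).
  assert (0 <= alpha * (3 - 9 * alpha - 7 * alpha ^ 2 - 3 * alpha ^ 3))
    by (apply Rmult_le_pos; lra).
  lra.
Qed.

Lemma NoDup_partition {A : Type} (P : A -> Prop) (l : list A) : NoDup l ->
  exists l1 l2, NoDup l1 /\ NoDup l2 /\ length l = (length l1 + length l2)%nat /\
    (forall x, In x l1 <-> In x l /\ P x) /\ (forall x, In x l2 <-> In x l /\ ~ P x).
Proof.
  induction 1 as [|a l Hal Hl IH].
  - exists nil, nil. do 3 (split; [auto using NoDup_nil|]). simpl; split; tauto.
  - destruct IH as [l1 [l2 [N1 [N2 [Hlen [H1 H2]]]]]].
    destruct (classic (P a)) as [Ha|Ha].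
    + exists (a :: l1), l2. split; [constructor; [rewrite H1|]; tauto|].
      split; [exact N2|]. split; [simpl; lia|].
      split; intros x; simpl; rewrite ?H1, ?H2; intuition congruence.
    + exists l1, (a :: l2). split; [exact N1|].
      split; [constructor; [rewrite H2|]; tauto|]. split; [simpl; lia|].
      split; intros x; simpl; rewrite ?H1, ?H2; intuition congruence.
Qed.

Lemma has_card_length_le {A : Type} (P : A -> Prop) n l :
  has_card P n -> NoDup l -> (forall x, In x l -> P x) -> (length l <= n)%nat.
Proof.
  intros [l' [Hnd [<- Hin]]] Hl Hsub.
  apply NoDup_incl_length; auto.
  intros x Hx. apply Hin, Hsub, Hx.
Qed.

Section Execution.
Context {Node : Type} (X : exec Node) (Nmin : nat) (alpha Delta D : R).
Hypothesis HM : model_assumptions X Nmin alpha Delta D.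

Let D_gt0 : 0 < D := D_pos _ _ _ _ _ HM.

Lemma alpha_Delta_nonneg : (1 <= Nmin)%nat -> 0 <= alpha /\ 0 <= Delta.
Proof.
  intros HN.
  destruct (N_min_bound _ _ _ _ _ HM 0 (Rle_refl 0)) as [n [Hc Hn]].
  assert (1 <= INR n) by (apply (le_INR 1); lia).
  pose proof (churn _ _ _ _ _ HM 0 n (Rle_refl 0) Hc nil (NoDup_nil _)
                (fun y Hy => False_ind _ Hy)).
  pose proof (failures _ _ _ _ _ HM 0 n (Rle_refl 0) Hc nil (NoDup_nil _)
                (fun y Hy => False_ind _ Hy)).
  simpl in *. split; nra.
Qed.

Lemma active_before T q a s :
  active X T q -> te X q = Some a -> a <= s -> s <= T -> active X s q.
Proof.
  intros [[_ Hl] Hc] Ha H1 H2. split; [split|].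
  - exists a; auto.
  - intros b Hb; specialize (Hl b Hb); lra.
  - intros [c [Hc1 Hc2]]. apply Hc. exists c; split; auto; lra.
Qed.

Lemma active_throughout_before T q a s1 s2 :
  active X T q -> te X q = Some a -> a <= s1 -> s2 <= T -> active_throughout X q s1 s2.
Proof. intros H Ha H1 H2 s Hs. apply (active_before T q a); auto; lra. Qed.

Lemma present_after_window t q :
  present X t q -> ~ enters_or_leaves_in X t (t + D) q -> present X (t + D) q.
Proof.
  intros [[a [Ha Hat]] Hl] Hn. split.
  - exists a; split; auto; lra.
  - intros b Hb. specialize (Hl b Hb).
    destruct (Rlt_or_le (t + D) b) as [|Hle]; auto.
    exfalso; apply Hn; right; exists b; split; auto; lra.
Qed.

Lemma enters_in_window_of_new t q : 0 <= t ->
  present X (t + D) q -> ~ present X t q -> enters_or_leaves_in X t (t + D) q.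
Proof.
  intros Ht [[a [Ha Hat]] Hl] Hn.
  destruct (Rle_or_lt a t) as [Hle|Hlt].
  - exfalso; apply Hn; split.
    + exists a; auto.
    + intros b Hb; specialize (Hl b Hb); lra.
  - left; exists a; repeat split; auto; lra.
Qed.

(* [y] counts the nodes that are new at [t + D]; they churn in the same
   window as [l], so both share the budget [alpha * n]. *)
Lemma churn_window t n n' l : 0 <= t ->
  has_card (present X t) n -> has_card (present X (t + D)) n' -> NoDup l ->
  (forall q, In q l -> present X t q /\ enters_or_leaves_in X t (t + D) q) ->
  exists y, 0 <= y /\ INR (length l) + y <= alpha * INR n /\ INR n' <= INR n + y.
Proof.
  intros Ht Hc Hc' Hl Hsub.
  destruct Hc' as [l' [Hl' [Hlen' Hin']]].
  destruct (NoDup_partition (present X t) l' Hl')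
    as [old [new [Hold [Hnew [Hsplit [Hinold Hinnew]]]]]].
  exists (INR (length new)). split; [|split].
  - apply pos_INR.
  - rewrite <- plus_INR, <- length_app.
    apply (churn _ _ _ _ _ HM t n Ht Hc).
    + apply NoDup_app; auto.
      intros q Hq Hq'. apply Hinnew in Hq'. apply Hsub in Hq. tauto.
    + intros q Hq. apply in_app_or in Hq as [Hq|Hq]; [apply Hsub; auto|].
      apply Hinnew in Hq as [Hq Hnp].
      apply enters_in_window_of_new; auto. apply Hin'; auto.
  - rewrite <- Hlen', Hsplit, plus_INR.
    apply Rplus_le_compat_r, le_INR.
    apply (has_card_length_le _ _ _ Hc Hold).
    intros q Hq. apply Hinold in Hq. tauto.
Qed.

Fixpoint perturbed (k : nat) (t : R) (q : Node) : Prop :=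
  match k with
  | O => crashed X t q
  | S k => enters_or_leaves_in X t (t + D) q \/ perturbed k (t + D) q
  end.

Lemma active_of_unperturbed k t q :
  present X t q -> ~ perturbed k t q -> active X (t + INR k * D) q.
Proof.
  revert t. induction k as [|k IH]; intros t Hq Hn; simpl in Hn.
  - replace (t + INR 0 * D) with t by (simpl; ring). split; auto.
  - replace (t + INR (S k) * D) with (t + D + INR k * D) by (rewrite S_INR; ring).
    apply IH; [apply present_after_window|]; tauto.
Qed.

Hypothesis alpha_nonneg : 0 <= alpha.
Hypothesis Delta_nonneg : 0 <= Delta.

Lemma perturbed_card k : INR k * alpha + Delta <= 1 ->
  forall t n l, 0 <= t -> has_card (present X t) n -> NoDup l ->
  (forall q, In q l -> present X t q /\ perturbed k t q) ->
  INR (length l) <= (INR k * alpha + Delta) * INR n.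
Proof.
  induction k as [|k IH]; intros Hk t n l Ht Hc Hl Hsub.
  - replace (INR 0 * alpha + Delta) with Delta by (simpl; ring).
    apply (failures _ _ _ _ _ HM t n Ht Hc l Hl), Hsub.
  - rewrite S_INR in Hk |- *.
    destruct (N_min_bound _ _ _ _ _ HM (t + D) ltac:(lra)) as [n' [Hc' _]].
    destruct (NoDup_partition (enters_or_leaves_in X t (t + D)) l Hl)
      as [churned [stayed [Hch [Hst [Hsplit [Hinch Hinst]]]]]].
    destruct (churn_window t n n' churned Ht Hc Hc' Hch) as [y [Hy [Hwin Hn']]].
    { intros q Hq. apply Hinch in Hq as [Hq Hcq]. split; [apply Hsub|]; auto. }
    assert (Hstayed : INR (length stayed) <= (INR k * alpha + Delta) * INR n').
    { apply (IH ltac:(nra) (t + D)); auto; [lra|].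
      intros q Hq. apply Hinst in Hq as [Hq Hnc]. apply Hsub in Hq as [Hp Hpk].
      split; [apply present_after_window|]; simpl in Hpk; tauto. }
    assert (Hc0 : 0 <= INR k * alpha + Delta) by (pose proof (pos_INR k); nra).
    assert ((INR k * alpha + Delta) * INR n' <= (INR k * alpha + Delta) * (INR n + y))
      by (apply Rmult_le_compat_l; assumption).
    assert ((INR k * alpha + Delta) * y <= y) by nra.
    rewrite Hsplit, plus_INR. nra.
Qed.

Hypothesis Nmin_pos : (1 <= Nmin)%nat.
Hypothesis budget : 3 * alpha + Delta < 1.

Lemma exists_unperturbed t : 0 <= t -> exists q, present X t q /\ ~ perturbed 3 t q.
Proof.
  intros Ht.
  destruct (N_min_bound _ _ _ _ _ HM t Ht) as [n [Hc Hn]].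
  apply NNPP. intros Hnone.
  pose proof Hc as [l [Hl [Hlen Hin]]].
  assert (Hbound : INR (length l) <= (INR 3 * alpha + Delta) * INR n).
  { apply (perturbed_card 3 ltac:(simpl; lra) t); auto.
    intros q Hq. apply Hin in Hq. split; auto.
    apply NNPP. intros Hnp. apply Hnone. exists q. auto. }
  assert (1 <= INR n) by (apply (le_INR 1); lia).
  rewrite Hlen in Hbound. simpl in Hbound. nra.
Qed.

Lemma entry_helper_exists p tpe : te X p = Some tpe -> 0 < tpe ->
  exists q aq, te X q = Some aq /\ (aq = 0 \/ aq + 2 * D < tpe) /\ aq < tpe /\
    active X (tpe + D) q.
Proof.
  intros Hp Htpe.
  assert (Ht0 : exists t0, 0 <= t0 /\ tpe - 2 * D <= t0 < tpe /\
                           (0 < t0 -> t0 = tpe - 2 * D)).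
  { destruct (Rle_or_lt (tpe - 2 * D) 0).
    - exists 0. repeat split; lra.
    - exists (tpe - 2 * D). repeat split; lra. }
  destruct Ht0 as [t0 [Ht0 [[Hlo Hhi] Hpos]]].
  destruct (exists_unperturbed t0 Ht0) as [q [Hq Hstable]].
  pose proof (active_of_unperturbed 3 t0 q Hq Hstable) as Hact.
  destruct Hq as [[aq [Haq Haqt0]] _].
  assert (Hentry : aq = 0 \/ (0 < aq /\ aq < t0)).
  { pose proof (te_nonneg _ _ _ _ _ HM q aq Haq).
    destruct (Rle_or_lt aq 0); [left; lra | right; split; auto].
    destruct (Rlt_or_le aq t0); auto.
    exfalso. apply Hstable. left. left. exists aq. repeat split; auto; lra. }
  exists q, aq. split; [exact Haq|]. split; [|split].
  - destruct Hentry as [|[Haq0 Haqlt]]; [left; auto | right].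
    rewrite (Hpos ltac:(lra)) in Haqlt. lra.
  - lra.
  - apply (active_before (t0 + INR 3 * D) q aq); auto; simpl; lra.
Qed.

Hypothesis HC : ccreg_joining X.

Definition evtime (e : ev Node) (s : R) : Prop :=
  match e with
  | EEnter r => te X r = Some s
  | EJoin r => tj X r = Some s
  | ELeave r => Defs.tl X r = Some s
  end.

Definition carries (e : ev Node) (m : msg Node) : Prop :=
  match e with
  | EEnter r => m = MEnter r \/ exists c, m = MEnterEcho c /\ c (EEnter r)
  | EJoin r => m = MJoined r \/ m = MJoinedEcho r
  | ELeave r => m = MLeave r \/ m = MLeaveEcho r
  end.

Lemma SysInfo_iff_evtime t1 t2 e :
  SysInfo X t1 t2 e <-> exists s, evtime e s /\ t1 <= s <= t2.
Proof. destruct e; reflexivity. Qed.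

Lemma changes_of_recv_carrier x s w m e :
  recv X x s w m -> active X s x -> carries e m -> changes X x s e.
Proof.
  intros Hr Ha Hm. destruct e as [r|r|r]; simpl in Hm.
  - destruct Hm as [->|[c [-> Hc]]].
    + apply (on_enter X HC x s w r Hr Ha).
    + apply (on_enter_echo X HC x s w c Hr Ha); auto.
  - destruct Hm as [->| ->].
    + apply (on_joined X HC x s w r Hr Ha).
    + apply (on_joined_echo X HC x s w r Hr Ha).
  - destruct Hm as [->| ->].
    + apply (on_leave X HC x s w r Hr Ha).
    + apply (on_leave_echo X HC x s w r Hr Ha).
Qed.

Lemma carrier_delivered w u m x e :
  bcast X w u m -> carries e m -> x <> w -> active_throughout X x u (u + D) ->
  exists t', u <= t' <= u + D /\ changes X x t' e.
Proof.
  intros Hb Hm Hne Hat.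
  destruct (delivery _ _ _ _ _ HM w u m x Hb Hne Hat) as [t' [Ht' Hr]].
  exists t'. split; auto. apply (changes_of_recv_carrier x t' w m); auto.
Qed.

(* Unless [x] originates [e], it learns [e] from a message, which it echoes. *)
Lemma event_spreads e s x :
  evtime e s -> 0 < s -> active_throughout X x s (s + D) ->
  exists t', s <= t' <= s + D /\ changes X x t' e /\
    (s < t' -> exists m, bcast X x t' m /\ carries e m).
Proof.
  intros He Hs Hat. destruct e as [r|r|r]; simpl in He.
  - destruct (on_Enter X HC r s He Hs) as [Hch Hb].
    destruct (classic (x = r)) as [->|Hne].
    + exists s. split; [lra|]. split; [exact Hch|]. lra.
    + destruct (delivery _ _ _ _ _ HM r s _ x Hb Hne Hat) as [t' [Ht' Hr]].
      destruct (on_enter X HC x t' r r Hr (Hat t' Ht')) as [Hch' [c [Hbc [Hc _]]]].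
      exists t'. split; [exact Ht'|]. split; [exact Hch'|]. intros _. exists (MEnterEcho c). split; auto. right. exists c. auto.
  - destruct (on_join X HC r s He Hs) as [Hch Hb].
    destruct (classic (x = r)) as [->|Hne].
    + exists s. split; [lra|]. split; [exact Hch|]. lra.
    + destruct (delivery _ _ _ _ _ HM r s _ x Hb Hne Hat) as [t' [Ht' Hr]].
      destruct (on_joined X HC x t' r r Hr (Hat t' Ht')) as [Hch' Hbe].
      exists t'. split; [exact Ht'|]. split; [exact Hch'|]. intros _. exists (MJoinedEcho r). split; simpl; auto.
  - destruct (on_Leave X HC r s He) as [w [Hb Hw]].
    destruct (classic (x = w)) as [->|Hne].
    + destruct Hw as [[-> _]|[_ [_ [_ Hch]]]].
      * exfalso. destruct (Hat s ltac:(lra)) as [[_ Hl] _]. specialize (Hl s He). lra.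
      * exists s. split; [lra|]. split; [exact Hch|]. lra.
    + destruct (delivery _ _ _ _ _ HM w s _ x Hb Hne Hat) as [t' [Ht' Hr]].
      destruct (on_leave X HC x t' w r Hr (Hat t' Ht')) as [Hch' Hbe].
      exists t'. split; [exact Ht'|]. split; [exact Hch'|]. intros _. exists (MLeaveEcho r). split; simpl; auto.
Qed.

Lemma event_known_after e s x :
  evtime e s -> 0 < s -> active_throughout X x s (s + D) -> changes X x (s + D) e.
Proof.
  intros He Hs Hat.
  destruct (event_spreads e s x He Hs Hat) as [t' [Ht' [Hch _]]].
  apply (changes_mono X HC x t'); auto. lra.
Qed.

Lemma S0_of_te_0 r : te X r = Some 0 -> S0 X r.
Proof.
  intros H. split.
  - exists 0. split; auto; lra.
  - intros b Hb. destruct (tl_after_te _ _ _ _ _ HM r b Hb) as [a [Ha Hab]].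
    rewrite H in Ha. injection Ha as <-. lra.
Qed.

Lemma changes_at_0 e p : evtime e 0 -> S0 X p -> changes X p 0 e.
Proof.
  intros He Hp. destruct e as [r|r|r]; simpl in He.
  - apply (init_S0 X HC p r Hp (S0_of_te_0 r He)).
  - destruct (tj_wf _ _ _ _ _ HM r 0 He) as [[a [Ha Ha0]] _].
    pose proof (te_nonneg _ _ _ _ _ HM r a Ha).
    replace a with 0 in Ha by lra.
    apply (init_S0 X HC p r Hp (S0_of_te_0 r Ha)).
  - destruct (tl_after_te _ _ _ _ _ HM r 0 He) as [a [Ha Hab]].
    pose proof (te_nonneg _ _ _ _ _ HM r a Ha). lra.
Qed.

(* The enter-echo of [q] to [p] carries everything [q] knew before echoing. *)
Lemma enter_echo_relays p q tpe aq :
  te X p = Some tpe -> 0 < tpe -> active X (tpe + 2 * D) p ->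
  te X q = Some aq -> aq <= tpe -> q <> p -> active X (tpe + D) q ->
  exists sq, tpe <= sq <= tpe + D /\
    forall e s, s < sq -> changes X q s e -> changes X p (tpe + 2 * D) e.
Proof.
  intros Hp Htpe Hpact Hq Haq Hqp Hqact.
  destruct (on_Enter X HC p tpe Hp Htpe) as [_ Hbp].
  destruct (delivery _ _ _ _ _ HM p tpe _ q Hbp Hqp
              (active_throughout_before _ q aq _ _ Hqact Hq Haq (Rle_refl _)))
    as [sq [Hsq Hrq]].
  destruct (on_enter X HC q sq p p Hrq
              (active_before _ q aq sq Hqact Hq ltac:(lra) ltac:(lra)))
    as [_ [c [Hbc [_ Hc]]]].
  destruct (delivery _ _ _ _ _ HM q sq _ p Hbc (not_eq_sym Hqp)
              (active_throughout_before _ p tpe sq (sq + D) Hpact Hp ltac:(lra) ltac:(lra)))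
    as [u [Hu Hru]].
  exists sq. split; [exact Hsq|]. intros e s Hs Hch.
  apply (changes_mono X HC p u); [lra|].
  apply (on_enter_echo X HC p u q c Hru
           (active_before _ p tpe u Hpact Hp ltac:(lra) ltac:(lra))).
  apply (Hc s); auto.
Qed.

Definition informed (p : Node) (t : R) : Prop :=
  forall tpe, te X p = Some tpe -> active X t p -> tpe + 2 * D <= t ->
  forall e, SysInfo X 0 (t - D) e -> changes X p t e.

Lemma helper_relays_events_before_entry p tpe e s :
  (forall q tau, tau < tpe -> informed q tau) ->
  te X p = Some tpe -> active X (tpe + 2 * D) p -> evtime e s -> 0 <= s < tpe ->
  changes X p (tpe + 2 * D) e.
Proof.
  intros IH Hp Hpact He [Hs0 Hs].
  assert (Htpe : 0 < tpe) by lra.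
  destruct (entry_helper_exists p tpe Hp Htpe) as [q [aq [Hq [Haq [Haqt Hqact]]]]].
  assert (Hqp : q <> p) by (intros ->; rewrite Hp in Hq; injection Hq; lra).
  destruct (enter_echo_relays p q tpe aq Hp Htpe Hpact Hq ltac:(lra) Hqp Hqact)
    as [sq [Hsq Hecho]].
  destruct (Rlt_or_le s aq) as [Hsaq|Haqs].
  - destruct Haq as [|Haq]; [lra|].
    set (tau := Rmax (s + D) (aq + 2 * D)).
    assert (s + D <= tau) by apply Rmax_l.
    assert (aq + 2 * D <= tau) by apply Rmax_r.
    assert (tau < tpe) by (apply Rmax_lub_lt; lra).
    apply (Hecho e tau); [lra|].
    apply (IH q tau ltac:(lra) aq Hq); [|lra|].
    + apply (active_before _ q aq tau Hqact Hq); lra.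
    + apply SysInfo_iff_evtime. exists s. split; auto; lra.
  - destruct (Req_dec s 0) as [->|Hsnz].
    + pose proof (te_nonneg _ _ _ _ _ HM q aq Hq).
      replace aq with 0 in Hq by lra.
      apply (Hecho e 0); [lra|].
      apply changes_at_0; auto. apply S0_of_te_0; auto.
    + destruct (event_spreads e s q He ltac:(lra)
                  (active_throughout_before _ q aq s (s + D) Hqact Hq Haqs ltac:(lra)))
        as [t' [Ht' [Hch Hfwd]]].
      destruct (Rlt_or_le t' sq) as [Hearly|Hlate]; [apply (Hecho e t'); auto|].
      destruct (Hfwd ltac:(lra)) as [m [Hbm Hm]].
      destruct (carrier_delivered q t' m p e Hbm Hm (not_eq_sym Hqp)
                  (active_throughout_before _ p tpe t' (t' + D) Hpact Hp
                     ltac:(lra) ltac:(lra)))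
        as [t'' [Ht'' Hch'']].
      apply (changes_mono X HC p t''); auto; lra.
Qed.

Lemma informed_step p t :
  (forall q tau, tau <= t - D -> informed q tau) -> informed p t.
Proof.
  intros IH tpe Hp Hact Ht e He.
  apply SysInfo_iff_evtime in He as [s [He [Hs0 Hst]]].
  pose proof (te_nonneg _ _ _ _ _ HM p tpe Hp) as Htpe0.
  destruct (Rlt_or_le s tpe) as [Hearly|Hlate].
  - apply (changes_mono X HC p (tpe + 2 * D)); [lra|].
    apply (helper_relays_events_before_entry p tpe e s); auto.
    + intros q tau Htau. apply IH. lra.
    + apply (active_before t p tpe); auto; lra.
  - destruct (Req_dec s 0) as [->|Hsnz].
    + replace tpe with 0 in Hp by lra.
      apply (changes_mono X HC p 0); [lra|].
      apply changes_at_0; auto. apply S0_of_te_0; auto.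
    + apply (changes_mono X HC p (s + D)); [lra|].
      apply event_known_after; auto; [lra|].
      apply (active_throughout_before t p tpe); auto; lra.
Qed.

Lemma informed_below n : forall p t, t <= INR n * D -> informed p t.
Proof.
  induction n as [|n IH]; intros p t Htn.
  - intros tpe Hp _ Ht. pose proof (te_nonneg _ _ _ _ _ HM p tpe Hp).
    simpl in Htn. lra.
  - apply informed_step. intros q tau Htau. apply IH.
    rewrite S_INR in Htn. lra.
Qed.

Lemma informed_everywhere p t : informed p t.
Proof.
  destruct (INR_unbounded (t / D)) as [n Hn].
  apply (informed_below n).
  assert (t = t / D * D) by (field; lra).
  nra.
Qed.

End Execution.

Theorem lemma5 (Node : Type) (X : exec Node) (Nmin : nat) (alpha Delta D : R) :
  alpha < 1 -> Delta < 1 ->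
  alpha <= 1 - Rpower 2 (- (1 / 4)) ->
  1 < ((1 - alpha) ^ 3 - Delta * (1 + alpha) ^ 3) * INR Nmin ->
  model_assumptions X Nmin alpha Delta D ->
  ccreg_joining X ->
  forall (p : Node) (t tpe : R),
    te X p = Some tpe -> active X t p -> tpe + 2 * D <= t ->
    forall e, SysInfo X 0 (t - D) e -> changes X p t e.
Proof.
  intros _ _ Hpow Hbudget HM HC p t.
  assert (HN : (1 <= Nmin)%nat) by (destruct Nmin; [simpl in Hbudget; lra | lia]).
  destruct (alpha_Delta_nonneg X Nmin alpha Delta D HM HN) as [Ha Hd].
  assert (Hk : 3 * alpha + Delta < 1).
  { pose proof Rpower_2_neg_quarter_ge. pose proof (pos_INR Nmin).
    apply three_alpha_plus_Delta_lt_1; auto; [lra | nra]. }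
  exact (informed_everywhere X Nmin alpha Delta D HM Ha Hd HN Hk HC p t).
Qed.
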